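(* Let $\|\cdot\|_\alpha$ be a submultiplicative norm from a dimension-invariant family, and let $A$ be an $n\times n$ matrix with a blocking of $n_t$ blocks that is strictly block diagonally dominant by columns, i.e. each $A_{j,j}$ is nonsingular and $\sum_{i\ne j}\|A_{i,j}\|_\alpha<\|A_{j,j}^{-1}\|_\alpha^{-1}$ for all $1\le j\le n_t$ (or strictly block diagonally dominant by rows, i.e. $\sum_{j\ne i}\|A_{i,j}\|_\alpha<\|A_{i,i}^{-1}\|_\alpha^{-1}$ for all $i$). Then $A$ is block strongly nonsingular and the block-sum growth factor satisfies $\rho_{\Sigma\alpha}=\max_{1\le k\le n_t}\|A^{(k)}\|_{\Sigma\alpha}/\|A\|_{\Sigma\alpha}=1$.
   Context: A dimension-invariant family of matrix norms: for every matrix $B$ and every contiguous block partition, $\max_{i,j}\|B_{i,j}\|\le\|B\|\le\sum_{i,j}\|B_{i,j}\|$. Blocking: a strictly increasing list $[1=\mathcal{I}_1<\dots<\mathcal{I}_{n_t+1}=n+1]$ defining blocks $A_{i,j}$. Block strongly nonsingular: all $A_{1:k,1:k}$ nonsingular. Block Schur complements: $A^{(1)}=A$, $A^{(k+1)}=A^{(k)}_{k+1:n_t,k+1:n_t}-A^{(k)}_{k+1:n_t,k}(A^{(k)}_{k,k})^{-1}A^{(k)}_{k,k+1:n_t}$ (blocks indexed $k+1,\dots,n_t$). Block-sum norm: $\|B\|_{\Sigma\alpha}=\sum_{i,j}\|B_{ij}\|_\alpha$ over the blocks of $B$. *)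

From HB Require Import structures.
From mathcomp Require Import all_boot all_order all_algebra.
Set Implicit Arguments. Unset Strict Implicit. Unset Printing Implicit Defensive.
Import Order.TTheory GRing.Theory Num.Theory.
Local Open Scope ring_scope.

(* Entry of a matrix addressed by natural-number indices (0-based);
   0 outside the matrix. *)
Definition mxnat (K : numFieldType) (m n : nat) (A : 'M[K]_(m, n)) (i j : nat) : K :=
  match (insub i : option 'I_m), (insub j : option 'I_n) with
  | Some i', Some j' => A i' j'
  | _, _ => 0
  end.

Definition subblk (K : numFieldType) (m n : nat) (A : 'M[K]_(m, n))
  (r0 c0 p q : nat) : 'M[K]_(p, q) :=
  \matrix_(i < p, j < q) mxnat A (r0 + i) (c0 + j).

(* A blocking of size n with nt blocks, 0-based:  the paper's
   [1 = I_1 < ... < I_{nt+1} = n+1] becomes I 0 = 0 < I 1 < ... < I nt = n;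
   block k (0-based) consists of indices I k, ..., I k.+1 - 1. *)
Definition is_blocking (n nt : nat) (I : nat -> nat) : Prop :=
  I 0%N = 0%N /\ I nt = n /\ (forall k, (k < nt)%N -> (I k < I k.+1)%N).

Definition blk (K : numFieldType) (m n : nat) (A : 'M[K]_(m, n))
  (I J : nat -> nat) (i j : nat) : 'M[K]_(I i.+1 - I i, J j.+1 - J j) :=
  subblk A (I i) (J j) (I i.+1 - I i) (J j.+1 - J j).

Definition norm_family (K : numFieldType) := forall m n : nat, 'M[K]_(m, n) -> K.

Definition is_norm_family (K : numFieldType) (nrm : norm_family K) : Prop :=
  forall m n : nat,
    (forall B : 'M[K]_(m, n), 0 <= nrm m n B) /\
    (forall B : 'M[K]_(m, n), nrm m n B = 0 -> B = 0) /\
    (forall (a : K) (B : 'M[K]_(m, n)), nrm m n (a *: B) = `|a| * nrm m n B) /\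
    (forall B C : 'M[K]_(m, n), nrm m n (B + C) <= nrm m n B + nrm m n C).

Definition dim_invariant (K : numFieldType) (nrm : norm_family K) : Prop :=
  forall (m n : nat) (B : 'M[K]_(m, n)) (rt ct : nat) (I J : nat -> nat),
    is_blocking m rt I -> is_blocking n ct J ->
    (forall i j, (i < rt)%N -> (j < ct)%N -> nrm _ _ (blk B I J i j) <= nrm _ _ B) /\
    nrm _ _ B <= \sum_(i < rt) \sum_(j < ct) nrm _ _ (blk B I J i j).

Definition submultiplicative (K : numFieldType) (nrm : norm_family K) : Prop :=
  forall (m n p : nat) (B : 'M[K]_(m, n)) (C : 'M[K]_(n, p)),
    nrm _ _ (B *m C) <= nrm _ _ B * nrm _ _ C.

Definition sbdd_cols (K : numFieldType) (nrm : norm_family K) (n : nat)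
  (A : 'M[K]_n) (nt : nat) (I : nat -> nat) : Prop :=
  forall j, (j < nt)%N ->
    blk A I I j j \in unitmx /\
    \sum_(i < nt | i != j :> nat) nrm _ _ (blk A I I i j)
      < (nrm _ _ (invmx (blk A I I j j)))^-1.

Definition sbdd_rows (K : numFieldType) (nrm : norm_family K) (n : nat)
  (A : 'M[K]_n) (nt : nat) (I : nat -> nat) : Prop :=
  forall i, (i < nt)%N ->
    blk A I I i i \in unitmx /\
    \sum_(j < nt | j != i :> nat) nrm _ _ (blk A I I i j)
      < (nrm _ _ (invmx (blk A I I i i)))^-1.

Definition lead_sub (K : numFieldType) (n : nat) (A : 'M[K]_n) (p : nat) : 'M[K]_p :=
  subblk A 0 0 p p.

Definition block_strongly_nonsingular (K : numFieldType) (n : nat) (A : 'M[K]_n)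
  (nt : nat) (I : nat -> nat) : Prop :=
  forall k, (1 <= k <= nt)%N -> lead_sub A (I k) \in unitmx.

(* Block Schur complements, stored in global coordinates as n x n matrices:
   schur A I k (0-based k) holds the paper's A^{(k+1)} in its trailing part
   (rows/columns with index >= I k); entries outside it are irrelevant and are
   kept from the previous step.  Recursion:
   A^{(k+1)} = A^{(k)}_{k+1:,k+1:} - A^{(k)}_{k+1:,k} (A^{(k)}_{k,k})^{-1} A^{(k)}_{k,k+1:}. *)
Fixpoint schur (K : numFieldType) (n : nat) (A : 'M[K]_n) (I : nat -> nat) (k : nat)
  : 'M[K]_n :=
  match k with
  | 0%N => A
  | k'.+1 =>
      let S := schur A I k' in
      let D := invmx (blk S I I k' k') in
      \matrix_(i < n, j < n)
        (if (I k'.+1 <= i)%N && (I k'.+1 <= j)%N then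
           S i j - \sum_(p < I k'.+1 - I k') \sum_(q < I k'.+1 - I k')
                     mxnat S i (I k' + p) * D p q * mxnat S (I k' + q) j
         else S i j)
  end.

(* Block-sum norm of A^{(k+1)} (0-based k): sum over its blocks (i,j), k <= i,j < nt. *)
Definition schur_sumnorm (K : numFieldType) (nrm : norm_family K) (n : nat)
  (A : 'M[K]_n) (nt : nat) (I : nat -> nat) (k : nat) : K :=
  \sum_(k <= i < nt) \sum_(k <= j < nt) nrm _ _ (blk (schur A I k) I I i j).

Definition growth_factor (K : numFieldType) (nrm : norm_family K) (n : nat)
  (A : 'M[K]_n) (nt : nat) (I : nat -> nat) : K :=
  \big[Num.max/0]_(k < nt) (schur_sumnorm nrm A nt I k / schur_sumnorm nrm A nt I 0).

From HB Require Import structures.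
From mathcomp Require Import all_boot all_order all_algebra.
From mathcomp Require Import ring.
Set Implicit Arguments. Unset Strict Implicit. Unset Printing Implicit Defensive.
Import Order.TTheory GRing.Theory Num.Theory.
Local Open Scope ring_scope.

(* Block Gaussian elimination preserves strict block column dominance.  At step k the
   pivot satisfies (sum_(i>k) ||A_ik||) ||A_kk^-1|| <= 1, so the update
   A_ij - A_ik A_kk^-1 A_kj adds at most ||A_kj|| to the mass of column j, which is
   exactly the pivot-row block that elimination discards; a perturbation bound for the
   inverse of the updated diagonal block keeps the column dominant.  Summing over the
   columns, the block-sum norm of the Schur complements never increases, and the ratio
   for k = 1 is 1.  Leading principal block submatrices inherit column dominance, and a
   column-dominant block matrix has trivial kernel: a null vector x would give
   sum_j ||x_j|| / ||A_jj^-1|| <= sum_j ||x_j|| sum_(i != j) ||A_ij||, contradicting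
   dominance.  Row dominance reduces to column dominance of A^T for the norm B |-> ||B^T||. *)

Lemma mxnatE (K : numFieldType) m n (A : 'M[K]_(m, n)) i j
    (lt_i : (i < m)%N) (lt_j : (j < n)%N) :
  mxnat A i j = A (Ordinal lt_i) (Ordinal lt_j).
Proof. by rewrite /mxnat (insubT (fun x => x < m)%N lt_i) (insubT (fun x => x < n)%N lt_j). Qed.

Lemma mxnat0 (K : numFieldType) m n i j : mxnat (0 : 'M[K]_(m, n)) i j = 0.
Proof. by rewrite /mxnat; case: insub => [i'|//]; case: insub => [j'|//]; rewrite mxE. Qed.

Lemma mxnat_tr (K : numFieldType) m n (A : 'M[K]_(m, n)) i j :
  mxnat A^T i j = mxnat A j i.
Proof. by rewrite /mxnat; case: (insub i) => [i'|]; case: (insub j) => [j'|] //; rewrite mxE. Qed.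

Section Blocking.

Variables (n nt : nat) (I : nat -> nat).
Hypothesis blockingI : is_blocking n nt I.

Lemma blocking_mono i j : (i <= j <= nt)%N -> (I i <= I j)%N.
Proof.
have [_ [_ ltI]] := blockingI; case/andP; elim: j => [|j IHj].
  by rewrite leqn0 => /eqP ->.
rewrite leq_eqVlt => /orP[/eqP -> //|le_ij] lt_j.
exact: leq_trans (IHj le_ij (ltnW lt_j)) (ltnW (ltI j lt_j)).
Qed.

Lemma blocking_le_size i : (i <= nt)%N -> (I i <= n)%N.
Proof. by have [_ [<- _]] := blockingI => le_i; apply: blocking_mono; rewrite le_i leqnn. Qed.

Lemma block_size_gt0 i : (i < nt)%N -> (0 < I i.+1 - I i)%N.
Proof. by have [_ [_ ltI]] := blockingI => lt_i; rewrite subn_gt0 ltI. Qed.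

Lemma blk_index_lt i (a : 'I_(I i.+1 - I i)) : (i < nt)%N -> (I i + a < n)%N.
Proof. by move=> lt_i; apply: leq_trans (blocking_le_size lt_i); rewrite -ltn_subRL. Qed.

Lemma blocking_index l : (l < n)%N -> exists2 j, (j < nt)%N & (I j <= l < I j.+1)%N.
Proof.
have [I0 [Int _]] := blockingI; rewrite -Int.
suff: forall k, (k <= nt)%N -> (l < I k)%N -> exists2 j, (j < nt)%N & (I j <= l < I j.+1)%N.
  exact.
elim=> [|k IHk] le_k lt_l; first by rewrite I0 in lt_l.
have [lt_lk|le_kl] := ltnP l (I k); first exact: IHk (ltnW le_k) lt_lk.
by exists k; rewrite ?le_kl.
Qed.

Lemma big_blocking (R : nmodType) (F : nat -> R) :
  \sum_(0 <= l < n) F l = \sum_(j < nt) \sum_(I j <= l < I j.+1) F l.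
Proof.
have [I0 [Int _]] := blockingI; rewrite -Int.
suff: forall k, (k <= nt)%N ->
    \sum_(0 <= l < I k) F l = \sum_(j < k) \sum_(I j <= l < I j.+1) F l by exact.
elim=> [|k IHk] le_k; first by rewrite I0 big_ord0 big_geq.
rewrite big_ord_recr /= -IHk ?(ltnW le_k) // (@big_cat_nat _ _ _ (I k)) //.
by apply: blocking_mono; rewrite leqnSn.
Qed.

Lemma blocking_prefix k : (k <= nt)%N -> is_blocking (I k) k I.
Proof.
have [I0 [_ ltI]] := blockingI => le_k; do 2!split=> //.
by move=> i lt_i; apply: ltI; apply: leq_trans le_k.
Qed.

End Blocking.

Lemma subblk_mulmx (K : numFieldType) m p q (B : 'M[K]_(m, p)) (C : 'M[K]_(p, q))
    kt J r0 c0 a b :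
  is_blocking p kt J -> (r0 + a <= m)%N -> (c0 + b <= q)%N ->
  subblk (B *m C) r0 c0 a b =
  \sum_(j < kt) subblk B r0 (J j) a (J j.+1 - J j) *m subblk C (J j) c0 (J j.+1 - J j) b.
Proof.
move=> blockingJ le_a le_b; apply/matrixP => s t.
have lt_s : (r0 + s < m)%N by apply: leq_trans le_a; rewrite ltn_add2l.
have lt_t : (c0 + t < q)%N by apply: leq_trans le_b; rewrite ltn_add2l.
rewrite mxE (mxnatE _ lt_s lt_t) mxE summxE.
transitivity (\sum_(0 <= l < p) mxnat B (r0 + s) l * mxnat C l (c0 + t)).
  rewrite big_mkord; apply: eq_bigr => l _.
  by rewrite (mxnatE _ lt_s (ltn_ord l)) (mxnatE _ (ltn_ord l) lt_t); congr (B _ _ * C _ _);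
    apply: val_inj.
rewrite (big_blocking blockingJ); apply: eq_bigr => j _.
rewrite mxE -{1}[J j]add0n big_addn big_mkord; apply: eq_bigr => u _.
by rewrite !mxE (addnC u).
Qed.

Lemma subblk_cV_eq0 (K : numFieldType) m k I (x : 'cV[K]_m) :
  is_blocking m k I -> (forall j, (j < k)%N -> subblk x (I j) 0 (I j.+1 - I j) 1 = 0) ->
  x = 0.
Proof.
move=> blockingI x_blk0; apply/matrixP => l c; rewrite (ord1 c) [RHS]mxE.
have [j lt_j /andP[le_jl lt_lj]] := blocking_index blockingI (ltn_ord l).
have lt_a : (l - I j < I j.+1 - I j)%N by rewrite ltn_sub2r // (leq_ltn_trans le_jl).
have := congr1 (fun X : 'M_(_, 1) => X (Ordinal lt_a) ord0) (x_blk0 j lt_j).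
rewrite !mxE /= subnKC // add0n (mxnatE _ (ltn_ord l) (ltn0Sn 0)).
by congr (x _ _ = _); apply: val_inj.
Qed.

Lemma lead_sub_blk (K : numFieldType) n (A : 'M[K]_n) nt I k i j :
  is_blocking n nt I -> (k <= nt)%N -> (i < k)%N -> (j < k)%N ->
  blk (lead_sub A (I k)) I I i j = blk A I I i j.
Proof.
move=> blockingI le_k lt_i lt_j; have blockingIk := blocking_prefix blockingI le_k.
apply/matrixP => a b; rewrite !mxE.
by rewrite (mxnatE _ (blk_index_lt blockingIk a lt_i) (blk_index_lt blockingIk b lt_j)) mxE.
Qed.

Lemma blk_schurS (K : numFieldType) n (A : 'M[K]_n) nt I k i j :
  is_blocking n nt I -> (k < i < nt)%N -> (k < j < nt)%N ->
  blk (schur A I k.+1) I I i j = blk (schur A I k) I I i j -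
    blk (schur A I k) I I i k *m invmx (blk (schur A I k) I I k k) *m
    blk (schur A I k) I I k j.
Proof.
move=> blockingI /andP[lt_ki lt_i] /andP[lt_kj lt_j]; apply/matrixP => a b.
have lt_a := blk_index_lt blockingI a lt_i; have lt_b := blk_index_lt blockingI b lt_j.
rewrite [LHS]mxE (mxnatE _ lt_a lt_b) [schur A I k.+1]/= mxE.
have le_kS l : (k < l < nt)%N -> (I k.+1 <= I l)%N.
  by case/andP=> lt_kl lt_l; apply: (blocking_mono blockingI); rewrite lt_kl ltnW.
rewrite !(leq_trans (le_kS i _) (leq_addr _ _)) ?(leq_trans (le_kS j _) (leq_addr _ _))
  ?lt_ki ?lt_kj //=.
rewrite !mxE (mxnatE _ lt_a lt_b); congr (_ - _).
rewrite exchange_big; apply: eq_bigr => q _; rewrite [in RHS]mxE big_distrl /=.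
by apply: eq_bigr => p _; rewrite [blk _ _ _ i k a p]mxE [blk _ _ _ k j q b]mxE.
Qed.

Lemma blk_tr (K : numFieldType) m n (A : 'M[K]_(m, n)) I J i j :
  blk A^T I J i j = (blk A J I j i)^T.
Proof. by apply/matrixP => a b; rewrite !mxE mxnat_tr. Qed.

Lemma lead_sub_tr (K : numFieldType) n (A : 'M[K]_n) p :
  lead_sub A^T p = (lead_sub A p)^T.
Proof. by apply/matrixP => a b; rewrite !mxE mxnat_tr. Qed.

Lemma schur_tr (K : numFieldType) n (A : 'M[K]_n) I k : schur A^T I k = (schur A I k)^T.
Proof.
elim: k => [//|k IHk] /=; rewrite IHk; apply/matrixP => i j; rewrite !mxE andbC.
case: ifP => // _; congr (_ - _).
rewrite blk_tr -trmx_inv exchange_big; apply: eq_bigr => p _; apply: eq_bigr => q _.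
by rewrite !mxnat_tr mxE; ring.
Qed.

Lemma unitmx_ker0 (K : fieldType) m (L : 'M[K]_m) :
  (forall x : 'cV_m, L *m x = 0 -> x = 0) -> L \in unitmx.
Proof.
move=> ker0; rewrite -unitmx_tr unitmxE unitfE; apply/negP => /det0P[v v_neq0 vL0].
move/eqP: v_neq0; apply; apply: trmx_inj; rewrite trmx0; apply: ker0.
by rewrite -[L]trmxK -trmx_mul vL0 trmx0.
Qed.

Lemma big_nat_D1 (R : nmodType) (F : nat -> R) m n j : (m <= j < n)%N ->
  \sum_(m <= i < n) F i = F j + \sum_(m <= i < n | i != j) F i.
Proof. by move=> j_in; rewrite (bigD1_seq j) ?mem_index_iota ?iota_uniq. Qed.

Lemma big_nat_neq_first (R : nmodType) (F : nat -> R) m n : (m < n)%N ->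
  \sum_(m <= i < n | i != m) F i = \sum_(m.+1 <= i < n) F i.
Proof.
move=> lt_m; rewrite big_ltn_cond // eqxx /= [RHS]big_nat_cond big_nat_cond.
apply: eq_bigl => i; rewrite andbT; case: (boolP (m < i < n)%N) => //= /andP[lt_mi _].
by rewrite neq_ltn lt_mi orbT.
Qed.

Lemma bigmax_ord_head (R : numDomainType) nt (f : nat -> R) :
  (0 < nt)%N -> 0 <= f 0%N -> (forall k, (k < nt)%N -> f k <= f 0%N) ->
  \big[Num.max/0]_(k < nt) f k = f 0%N.
Proof.
case: nt => // nt _ f0_ge0 le_f0; rewrite big_ord_recl max_l //.
by apply: bigmax_le => // i _; apply: le_f0.
Qed.

(* With a = ||A_kj||, c = ||A_jk||, b = ||A_kk^-1||, g = ||A_jj^-1||^-1, and S, T the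
   masses of columns j and k in the rows i > k, i != j. *)
Lemma schur_update_arith (R : numDomainType) (a c b S T g : R) :
  0 <= a -> 0 <= b -> 0 <= S -> 0 <= T -> a + S < g -> (c + T) * b <= 1 ->
  c * b * a < g /\ S + T * b * a < g - c * b * a.
Proof.
move=> a_ge0 b_ge0 S_ge0 T_ge0 lt_g le_1.
have le_Tb : T * b <= 1 - c * b by rewrite lerBrDr addrC -mulrDl.
have le_a : c * b * a <= a.
  rewrite -[leRHS]mul1r; apply: ler_wpM2r => //; apply: le_trans le_1.
  by rewrite mulrDl lerDl mulr_ge0.
split; first by apply: le_lt_trans lt_g; apply: le_trans le_a _; rewrite lerDl.
have le_Tba : T * b * a <= a - c * b * a.
  by rewrite -[X in X - _]mul1r -mulrBl; apply: ler_wpM2r.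
apply: le_lt_trans (_ : S + (a - c * b * a) < g - c * b * a); first by rewrite lerD2l.
by rewrite addrA ltrD2r addrC.
Qed.

Lemma unitmx_neq0 (R : comUnitRingType) d (X : 'M[R]_d) :
  (0 < d)%N -> X \in unitmx -> X != 0.
Proof.
by case: d X => // d X _; apply: contraTneq => ->; rewrite unitmxE det0 unitr0.
Qed.

Section NormFamily.

Local Unset Implicit Arguments.
Variables (K : numFieldType) (nrm : norm_family K).
Local Set Implicit Arguments.
Hypothesis nrmP : is_norm_family nrm.

Lemma nrm_ge0 m n (B : 'M[K]_(m, n)) : 0 <= nrm _ _ B.
Proof. by have [nrm_ge0 _] := nrmP m n. Qed.

Lemma nrm_eq0 m n (B : 'M[K]_(m, n)) : (nrm _ _ B == 0) = (B == 0).
Proof.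
have [_ [nrm0_eq0 [nrmZ _]]] := nrmP m n.
apply/eqP/eqP => [/nrm0_eq0 //|->].
by rewrite -(scale0r (0 : 'M[K]_(m, n))) nrmZ normr0 mul0r.
Qed.

Lemma nrm0 m n : nrm m n 0 = 0.
Proof. by apply/eqP; rewrite nrm_eq0. Qed.

Lemma nrm_gt0 m n (B : 'M[K]_(m, n)) : (0 < nrm _ _ B) = (B != 0).
Proof. by rewrite lt_def nrm_eq0 nrm_ge0 andbT. Qed.

Lemma nrm_gt0_dim m n (B : 'M[K]_(m, n)) : 0 < nrm _ _ B -> (0 < m)%N.
Proof. by case: m B => // B; rewrite [B]flatmx0 nrm_gt0 eqxx. Qed.

Lemma nrmN m n (B : 'M[K]_(m, n)) : nrm _ _ (- B) = nrm _ _ B.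
Proof.
have [_ [_ [nrmZ _]]] := nrmP m n.
by rewrite -scaleN1r nrmZ normrN normr1 mul1r.
Qed.

Lemma nrmD m n (B C : 'M[K]_(m, n)) : nrm _ _ (B + C) <= nrm _ _ B + nrm _ _ C.
Proof. by have [_ [_ [_ nrmD]]] := nrmP m n; apply: nrmD. Qed.

Lemma nrmB m n (B C : 'M[K]_(m, n)) : nrm _ _ (B - C) <= nrm _ _ B + nrm _ _ C.
Proof. by rewrite -(nrmN C) nrmD. Qed.

Lemma nrm_sum m n (J : Type) (r : seq J) (P : pred J) (F : J -> 'M[K]_(m, n)) :
  nrm _ _ (\sum_(j <- r | P j) F j) <= \sum_(j <- r | P j) nrm _ _ (F j).
Proof.
elim/big_rec2: _ => [|j x y _ le_xy]; first by rewrite nrm0.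
by apply: le_trans (nrmD _ _) _; rewrite lerD2l.
Qed.

Lemma nrm_unitmx_gt0 d (X : 'M[K]_d) : (0 < d)%N -> X \in unitmx -> 0 < nrm _ _ X.
Proof. by move=> d_gt0 unitX; rewrite nrm_gt0 unitmx_neq0. Qed.

Hypothesis nrm_submult : submultiplicative nrm.

Lemma nrm_mulmx3 m n p q (X : 'M[K]_(m, n)) (Y : 'M[K]_(n, p)) (Z : 'M[K]_(p, q)) :
  nrm _ _ (X *m Y *m Z) <= nrm _ _ X * nrm _ _ Y * nrm _ _ Z.
Proof.
apply: le_trans (nrm_submult _ _) _; apply: ler_wpM2r; first exact: nrm_ge0.
exact: nrm_submult.
Qed.

Lemma unitmx_subr d (B E : 'M[K]_d) :
  B \in unitmx -> nrm _ _ E * nrm _ _ (invmx B) < 1 -> B - E \in unitmx.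
Proof.
move=> unitB small_E; apply: unitmx_ker0 => x; rewrite mulmxBl => /eqP; rewrite subr_eq0.
move=> /eqP BxEx; apply/eqP; rewrite -nrm_eq0; apply: contraTT small_E => x_neq0.
apply/negP => small_E.
have x_gt0 : 0 < nrm _ _ x by rewrite lt_def x_neq0 nrm_ge0.
have : 1 * nrm _ _ x <= nrm _ _ (invmx B) * nrm _ _ E * nrm _ _ x.
  by rewrite mul1r -{1}(mulKmx unitB x) BxEx mulmxA nrm_mulmx3.
by rewrite ler_pM2r // mulrC => /(lt_le_trans small_E); rewrite ltxx.
Qed.

Lemma nrm_invmx_subr d (B E : 'M[K]_d) :
  B \in unitmx -> 0 < nrm _ _ (invmx B) -> nrm _ _ E * nrm _ _ (invmx B) < 1 ->
  (nrm _ _ (invmx B))^-1 - nrm _ _ E <= (nrm _ _ (invmx (B - E)))^-1.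
Proof.
set b := nrm _ _ (invmx B); set e := nrm _ _ E => unitB b_gt0 small_E.
have unitBE := unitmx_subr unitB small_E.
set C := invmx (B - E); set g := nrm _ _ C.
have g_gt0 : 0 < g.
  by rewrite nrm_unitmx_gt0 ?unitmx_inv // (nrm_gt0_dim b_gt0).
(* the resolvent identity for B - E *)
have CE : C = invmx B + C *m E *m invmx B.
  have CB : C *m B = 1%:M + C *m E by rewrite -(mulVmx unitBE) mulmxBr subrK.
  by rewrite -{1}(mulmxK unitB C) CB mulmxDl mul1mx.
have le_g : g <= b + g * e * b.
  by rewrite {1}/g {1}CE; apply: le_trans (nrmD _ _) _; rewrite lerD2l nrm_mulmx3.
rewrite -[g^-1]div1r ler_pdivlMr //.
have -> : (b^-1 - e) * g = b^-1 * (g - g * e * b) by field; apply: lt0r_neq0.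
rewrite -(mulVf (lt0r_neq0 b_gt0)); apply: ler_wpM2l; first by rewrite invr_ge0 ltW.
by rewrite lerBlDr.
Qed.

Definition col_dominant (d : nat -> nat) (M : forall i j, 'M[K]_(d i, d j)) (k nt : nat) :=
  forall j, (k <= j < nt)%N -> M j j \in unitmx /\
    \sum_(k <= i < nt | i != j) nrm _ _ (M i j) < (nrm _ _ (invmx (M j j)))^-1.

Definition blocksum (d : nat -> nat) (M : forall i j, 'M[K]_(d i, d j)) (k nt : nat) :=
  \sum_(k <= i < nt) \sum_(k <= j < nt) nrm _ _ (M i j).

Lemma col_dominant_invmx_gt0 d (M : forall i j, 'M[K]_(d i, d j)) k nt j :
  col_dominant M k nt -> (k <= j < nt)%N -> 0 < nrm _ _ (invmx (M j j)).
Proof.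
move=> M_dom j_in; have [_ lt_inv] := M_dom j j_in; rewrite -invr_gt0.
by apply: le_lt_trans lt_inv; apply: sumr_ge0 => i _; apply: nrm_ge0.
Qed.

Lemma col_dominant_prefix d (M : forall i j, 'M[K]_(d i, d j)) k nt nt' :
  (nt' <= nt)%N -> col_dominant M k nt -> col_dominant M k nt'.
Proof.
move=> le_nt M_dom j /andP[le_kj lt_j]; have lt_jnt := leq_trans lt_j le_nt.
have [-> lt_inv] := M_dom j (introT andP (conj le_kj lt_jnt)); split=> //.
have le_knt' := leq_trans le_kj (ltnW lt_j).
apply: le_lt_trans lt_inv; rewrite (@big_cat_nat _ _ _ nt' k nt _ _ le_knt' le_nt) /=.
by rewrite lerDl; apply: sumr_ge0 => i _; apply: nrm_ge0.
Qed.

Section SchurStep.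

Variables (d : nat -> nat) (M M' : forall i j, 'M[K]_(d i, d j)) (k nt : nat).
Hypothesis M_dom : col_dominant M k nt.
Hypothesis lt_k : (k < nt)%N.
Hypothesis M'E : forall i j, (k < i < nt)%N -> (k < j < nt)%N ->
  M' i j = M i j - M i k *m invmx (M k k) *m M k j.

Let k_in : (k <= k < nt)%N. Proof. by rewrite leqnn lt_k. Qed.

Lemma pivot_colsum_le1 :
  (\sum_(k.+1 <= i < nt) nrm _ _ (M i k)) * nrm _ _ (invmx (M k k)) <= 1.
Proof.
have [_ lt_inv] := M_dom k_in; have b_gt0 := col_dominant_invmx_gt0 M_dom k_in.
by rewrite -ler_pdivlMr // div1r ltW // -big_nat_neq_first.
Qed.

Lemma schur_update_nrm_le i j : (k < i < nt)%N -> (k < j < nt)%N ->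
  nrm _ _ (M' i j) <=
  nrm _ _ (M i j) + nrm _ _ (M i k) * nrm _ _ (invmx (M k k)) * nrm _ _ (M k j).
Proof.
by move=> i_in j_in; rewrite M'E //; apply: le_trans (nrmB _ _) _; rewrite lerD2l nrm_mulmx3.
Qed.

Lemma schur_update_colsum_le (P : pred nat) j : (k < j < nt)%N ->
  \sum_(k.+1 <= i < nt | P i) nrm _ _ (M' i j) <=
  \sum_(k.+1 <= i < nt | P i) nrm _ _ (M i j) +
  (\sum_(k.+1 <= i < nt | P i) nrm _ _ (M i k)) * nrm _ _ (invmx (M k k)) * nrm _ _ (M k j).
Proof.
move=> j_in; rewrite !mulr_suml -big_split /= big_nat_cond [leRHS]big_nat_cond.
by apply: ler_sum => i /andP[i_in _]; apply: schur_update_nrm_le.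
Qed.

Lemma schur_update_col_dominant : col_dominant M' k.+1 nt.
Proof.
move=> j j_in; have j_in' : (k <= j < nt)%N by case/andP: j_in => /ltnW -> ->.
have [unit_jj dom_j] := M_dom j_in'.
have bj_gt0 := col_dominant_invmx_gt0 M_dom j_in'.
have b_ge0 := ltW (col_dominant_invmx_gt0 M_dom k_in).
rewrite big_ltn_cond // neq_ltn (andP j_in).1 /= in dom_j.
have le_1 := pivot_colsum_le1; rewrite (big_nat_D1 _ j_in) in le_1.
have [lt_e lt_col] := schur_update_arith (nrm_ge0 (M k j)) b_ge0
  (sumr_ge0 _ (fun i _ => nrm_ge0 (M i j))) (sumr_ge0 _ (fun i _ => nrm_ge0 (M i k)))
  dom_j le_1.
have small_E : nrm _ _ (M j k *m invmx (M k k) *m M k j) * nrm _ _ (invmx (M j j)) < 1.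
  by rewrite -ltr_pdivlMr // div1r; apply: le_lt_trans lt_e; apply: nrm_mulmx3.
rewrite M'E //; split; first exact: unitmx_subr.
apply: le_lt_trans (schur_update_colsum_le _ j_in) _.
apply: lt_le_trans lt_col (le_trans _ (nrm_invmx_subr unit_jj bj_gt0 small_E)).
by rewrite lerD2l lerN2 nrm_mulmx3.
Qed.

Lemma schur_update_blocksum_le : blocksum M' k.+1 nt <= blocksum M k nt.
Proof.
rewrite /blocksum exchange_big_nat [leRHS]exchange_big_nat [leRHS]big_ltn //.
apply: ler_wpDl; first by apply: sumr_ge0 => i _; apply: nrm_ge0.
rewrite big_nat_cond [leRHS]big_nat_cond; apply: ler_sum => j /andP[j_in _].
apply: le_trans (schur_update_colsum_le xpredT j_in) _.
rewrite [leRHS]big_ltn //= addrC lerD2l.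
rewrite -[leRHS]mul1r; apply: ler_wpM2r; [exact: nrm_ge0 | exact: pivot_colsum_le1].
Qed.

End SchurStep.

Lemma col_dominant_ker0 d (M : forall i j, 'M[K]_(d i, d j)) nt p
    (x : forall j, 'M[K]_(d j, p)) :
  col_dominant M 0 nt ->
  (forall i, (i < nt)%N -> \sum_(0 <= j < nt) M i j *m x j = 0) ->
  forall j, (j < nt)%N -> x j = 0.
Proof.
move=> M_dom Mx0 j0 lt_j0; apply/eqP; rewrite -nrm_eq0; apply: contraT => x_neq0.
pose w j := nrm _ _ (x j); pose b j := nrm _ _ (invmx (M j j)).
have b_gt0 j : (j < nt)%N -> 0 < b j by move=> lt_j; apply: col_dominant_invmx_gt0 M_dom _.
(* the i-th block equation gives x_i = - M_ii^-1 (sum_(j != i) M_ij x_j) *)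
have wb_le i : (i < nt)%N -> w i / b i <= \sum_(0 <= j < nt | j != i) nrm _ _ (M i j) * w j.
  move=> lt_i; have [unit_ii _] := M_dom i lt_i.
  rewrite ler_pdivrMr ?b_gt0 //; move/eqP: (Mx0 i lt_i); rewrite (big_nat_D1 (m := 0) _ lt_i).
  rewrite addr_eq0 => /eqP Mx_ii; rewrite /w -(mulKmx unit_ii (x i)) Mx_ii.
  apply: le_trans (nrm_submult _ _) _; rewrite nrmN mulrC.
  apply: ler_wpM2r; first exact: ltW (b_gt0 i lt_i).
  by apply: le_trans (nrm_sum _ _ _) _; apply: ler_sum => j _; apply: nrm_submult.
pose c j := \sum_(0 <= i < nt | i != j) nrm _ _ (M i j).
have le_wc : \sum_(0 <= i < nt) w i / b i <= \sum_(0 <= j < nt) w j * c j.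
  apply: le_trans (_ : \sum_(0 <= i < nt) \sum_(0 <= j < nt | j != i)
                        nrm _ _ (M i j) * w j <= _).
    by rewrite big_nat_cond [leRHS]big_nat_cond; apply: ler_sum => i /andP[/wb_le].
  under eq_bigr do rewrite big_mkcond /=.
  rewrite exchange_big_nat /=; apply: ler_sum => j _.
  rewrite /c mulr_sumr [leRHS]big_mkcond /=; apply: ler_sum => i _.
  by rewrite eq_sym; case: (i != j); rewrite // mulrC.
have lt_wc : \sum_(0 <= j < nt) w j * c j < \sum_(0 <= j < nt) w j / b j.
  rewrite (big_nat_D1 (m := 0) _ lt_j0) [ltRHS](big_nat_D1 (m := 0) _ lt_j0).
  have [_ dom_j0] := M_dom j0 lt_j0.
  apply: ltr_leD; first by rewrite ltr_pM2l // lt_def x_neq0 nrm_ge0.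
  rewrite big_nat_cond [leRHS]big_nat_cond; apply: ler_sum => j /andP[lt_j _].
  have [_ /ltW dom_j] := M_dom j lt_j.
  by apply: ler_wpM2l; first exact: nrm_ge0.
by have := le_lt_trans le_wc lt_wc; rewrite ltxx.
Qed.

Lemma eq_col_dominant d (M M' : forall i j, 'M[K]_(d i, d j)) k nt :
  (forall i j, (i < nt)%N -> (j < nt)%N -> M i j = M' i j) ->
  col_dominant M k nt -> col_dominant M' k nt.
Proof.
move=> eqM M_dom j j_in; have lt_j := (andP j_in).2; rewrite -eqM //.
have [-> lt_inv] := M_dom j j_in; split=> //.
suff -> : \sum_(k <= i < nt | i != j) nrm _ _ (M' i j) =
          \sum_(k <= i < nt | i != j) nrm _ _ (M i j) by [].
rewrite big_nat_cond [RHS]big_nat_cond.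
by apply: eq_bigr => i /andP[/andP[_ lt_i] _]; rewrite eqM.
Qed.

Lemma sbdd_cols_col_dominant n (A : 'M[K]_n) nt I :
  sbdd_cols nrm A nt I -> col_dominant (blk A I I) 0 nt.
Proof. by move=> A_dom j lt_j; rewrite big_mkord; apply: A_dom. Qed.

Lemma col_dominant_blk_unitmx m (L : 'M[K]_m) k I :
  is_blocking m k I -> col_dominant (blk L I I) 0 k -> L \in unitmx.
Proof.
move=> blockingI L_dom; apply: unitmx_ker0 => x Lx0.
apply: (subblk_cV_eq0 blockingI) => j lt_j.
apply: (col_dominant_ker0 (x := fun j => subblk x (I j) 0 (I j.+1 - I j) 1) L_dom _ lt_j).
move=> i lt_i; have le_i : (I i + (I i.+1 - I i) <= m)%N.
  by rewrite subnKC ?(blocking_le_size blockingI lt_i) // (blocking_mono blockingI) ?leqnSn.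
by rewrite big_mkord -(subblk_mulmx _ _ blockingI le_i (leqnn _)) Lx0;
  apply/matrixP => a b; rewrite !mxE mxnat0.
Qed.

Lemma sbdd_cols_strongly_nonsingular n (A : 'M[K]_n) nt I :
  is_blocking n nt I -> sbdd_cols nrm A nt I -> block_strongly_nonsingular A nt I.
Proof.
move=> blockingI A_dom k /andP[_ le_k].
apply: (col_dominant_blk_unitmx (blocking_prefix blockingI le_k)).
apply: (eq_col_dominant (M := blk A I I)) => [i j lt_i lt_j|].
  by rewrite (lead_sub_blk A blockingI le_k).
exact: col_dominant_prefix le_k (sbdd_cols_col_dominant A_dom).
Qed.

Lemma schur_col_dominant_sumnorm_le n (A : 'M[K]_n) nt I :
  is_blocking n nt I -> sbdd_cols nrm A nt I -> forall k, (k < nt)%N ->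
  col_dominant (blk (schur A I k) I I) k nt /\
  schur_sumnorm nrm A nt I k <= schur_sumnorm nrm A nt I 0.
Proof.
move=> blockingI A_dom; elim=> [|k IHk] lt_k; first by split=> //; apply: sbdd_cols_col_dominant.
have [dom_k le_k] := IHk (ltnW lt_k).
have schurE i j := @blk_schurS K n A nt I k i j blockingI.
split; first exact: schur_update_col_dominant dom_k (ltnW lt_k) schurE.
exact: le_trans (schur_update_blocksum_le dom_k (ltnW lt_k) schurE) le_k.
Qed.

Lemma sbdd_cols_growth_factor n (A : 'M[K]_n) nt I :
  (0 < n)%N -> is_blocking n nt I -> sbdd_cols nrm A nt I -> growth_factor nrm A nt I = 1.
Proof.
move=> n_gt0 blockingI A_dom.
have nt_gt0 : (0 < nt)%N.
  by case: nt blockingI {A_dom} => // -[I0 [In _]]; rewrite -In I0 in n_gt0.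
have sum0_gt0 : 0 < schur_sumnorm nrm A nt I 0.
  have [unit00 _] := A_dom 0%N nt_gt0.
  apply: lt_le_trans (nrm_unitmx_gt0 (block_size_gt0 blockingI nt_gt0) unit00) _.
  rewrite /schur_sumnorm big_ltn //= [X in X + _]big_ltn //= -addrA lerDl.
  apply: addr_ge0; apply: sumr_ge0 => i _; first exact: nrm_ge0.
  by apply: sumr_ge0 => j _; apply: nrm_ge0.
rewrite /growth_factor (bigmax_ord_head (f := fun k => schur_sumnorm nrm A nt I k /
  schur_sumnorm nrm A nt I 0)) //= ?divff ?gt_eqF // => k lt_k.
by rewrite ler_pdivrMr // mul1r; case: (schur_col_dominant_sumnorm_le blockingI A_dom lt_k).
Qed.

End NormFamily.

Definition tr_nrm (K : numFieldType) (nrm : norm_family K) : norm_family K :=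
  fun m n B => nrm n m B^T.

Lemma tr_nrm_family (K : numFieldType) (nrm : norm_family K) :
  is_norm_family nrm -> is_norm_family (tr_nrm nrm).
Proof.
move=> nrmP m n; have [ge0 [eq0 [nrmZ nrmD]]] := nrmP n m; rewrite /tr_nrm.
split; last split; last split.
- by move=> B; apply: ge0.
- by move=> B /eq0 BT0; apply: trmx_inj; rewrite BT0 trmx0.
- by move=> a B; rewrite linearZ nrmZ.
- by move=> B C; rewrite linearD nrmD.
Qed.

Lemma tr_nrm_submult (K : numFieldType) (nrm : norm_family K) :
  submultiplicative nrm -> submultiplicative (tr_nrm nrm).
Proof. by move=> nrm_submult m n p B C; rewrite /tr_nrm trmx_mul mulrC. Qed.

Lemma sbdd_rows_tr (K : numFieldType) (nrm : norm_family K) n (A : 'M[K]_n) nt I :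
  sbdd_rows nrm A nt I -> sbdd_cols (tr_nrm nrm) A^T nt I.
Proof.
move=> A_dom j lt_j; have [unit_jj lt_inv] := A_dom j lt_j.
rewrite blk_tr unitmx_tr /tr_nrm -trmx_inv trmxK; split=> //.
by under eq_bigr => i _ do rewrite blk_tr trmxK.
Qed.

Lemma strongly_nonsingular_tr (K : numFieldType) n (A : 'M[K]_n) nt I :
  block_strongly_nonsingular A^T nt I -> block_strongly_nonsingular A nt I.
Proof. by move=> AT_sn k k_in; rewrite -unitmx_tr -lead_sub_tr AT_sn. Qed.

Lemma growth_factor_tr (K : numFieldType) (nrm : norm_family K) n (A : 'M[K]_n) nt I :
  growth_factor (tr_nrm nrm) A^T nt I = growth_factor nrm A nt I.
Proof.
have sumnormE k : schur_sumnorm (tr_nrm nrm) A^T nt I k = schur_sumnorm nrm A nt I k.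
  rewrite /schur_sumnorm schur_tr exchange_big_nat; apply: eq_bigr => i _.
  by apply: eq_bigr => j _; rewrite /tr_nrm blk_tr trmxK.
by apply: eq_bigr => k _; rewrite !sumnormE.
Qed.

Theorem mainTheorem12 (K : numFieldType) (nrm : norm_family K)
  (n : nat) (A : 'M[K]_n) (nt : nat) (I : nat -> nat) :
  is_norm_family nrm -> dim_invariant nrm -> submultiplicative nrm ->
  (0 < n)%N -> is_blocking n nt I ->
  (sbdd_cols nrm A nt I \/ sbdd_rows nrm A nt I) ->
  block_strongly_nonsingular A nt I /\ growth_factor nrm A nt I = 1.
Proof.
move=> nrmP _ nrm_submult n_gt0 blockingI [A_dom | A_dom].
  split; first exact: sbdd_cols_strongly_nonsingular A_dom.
  by rewrite (sbdd_cols_growth_factor nrmP nrm_submult n_gt0 blockingI A_dom).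
have trP := tr_nrm_family nrmP; have tr_submult := tr_nrm_submult nrm_submult.
have AT_dom := sbdd_rows_tr A_dom; split.
  by apply: strongly_nonsingular_tr; apply: sbdd_cols_strongly_nonsingular AT_dom.
by rewrite -growth_factor_tr (sbdd_cols_growth_factor trP tr_submult n_gt0 blockingI AT_dom).
Qed.
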